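(* Let $\mathfrak{L}_3(\alpha_1,\beta_1,\gamma_1,\alpha_2,\beta_2,\gamma_2):=P(Z(\alpha_1,\beta_1,\gamma_1),Y(\alpha_2,\beta_2,\gamma_2))$ for $(\alpha_i,\beta_i,\gamma_i)\in(-\pi,\pi]\times(0,\pi)\times(-\pi,\pi]$, $i=1,2$. Then no point with $\alpha_2=\gamma_2=0$ is a critical point of $\mathfrak{L}_3$, i.e. the gradient of $\mathfrak{L}_3$ with respect to all variables is nonzero at every such point.
   Context: Basis of $\mathbb C^3$: $|1\rangle,|2\rangle,|3\rangle$ (standard basis). Spin-1 matrices in this basis: $J_y=\frac{1}{\sqrt2}\begin{pmatrix}0&-i&0\\ i&0&-i\\ 0&i&0\end{pmatrix}$, $J_z=\mathrm{diag}(1,0,-1)$. Define $Z(\alpha,\beta,\gamma)=e^{-i\alpha J_z}e^{-i\beta J_y}e^{-i\gamma J_z}$ and $Y(\alpha,\beta,\gamma)=e^{-i\alpha J_y}e^{-i\beta J_z}e^{-i\gamma J_y}$. Let $\mathcal R=\{Z(\alpha,\beta,\gamma):\alpha,\beta,\gamma\in\mathbb R\}\subset U(3)$. For $j\in\{1,2\}$ let $P_j=|j\rangle\langle j|$ and $\mathcal M_j(\rho)=P_j\rho P_j+(\mathbb I-P_j)\rho(\mathbb I-P_j)$. Define $P(U_1,U_2)=\langle 2|U_2\,\mathcal M_1(U_1|1\rangle\langle 1|U_1^\dagger)\,U_2^\dagger|2\rangle$ for $U_1,U_2\in\mathcal R$. *)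

From Stdlib Require Import Reals Factorial.
From Coquelicot Require Import Coquelicot.
Open Scope R_scope.

(* 3x3 complex matrices, indices 0,1,2 standing for |1>,|2>,|3>.
   Entries outside {0,1,2} are irrelevant (products only sum over 0..2). *)
Definition mat := nat -> nat -> C.

Definition mmul (A B : mat) : mat :=
  fun i j => Cplus (Cmult (A i 0%nat) (B 0%nat j))
               (Cplus (Cmult (A i 1%nat) (B 1%nat j)) (Cmult (A i 2%nat) (B 2%nat j))).
Definition madd (A B : mat) : mat := fun i j => Cplus (A i j) (B i j).
Definition msub (A B : mat) : mat := fun i j => Cminus (A i j) (B i j).
Definition mscale (c : C) (A : mat) : mat := fun i j => Cmult c (A i j).
Definition mid : mat := fun i j => if Nat.eqb i j then RtoC 1 else RtoC 0.
Definition madj (A : mat) : mat := fun i j => Cconj (A j i).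

Fixpoint mpow (A : mat) (n : nat) : mat :=
  match n with O => mid | S n => mmul A (mpow A n) end.

Definition mexp (A : mat) : mat :=
  fun i j => (Series (fun n => Re (mpow A n i j) / INR (Factorial.fact n)),
              Series (fun n => Im (mpow A n i j) / INR (Factorial.fact n))).

Definition Jy : mat := fun i j =>
  match i, j with
  | 0%nat, 1%nat => Cmult (RtoC (- / sqrt 2)) Ci
  | 1%nat, 0%nat => Cmult (RtoC (/ sqrt 2)) Ci
  | 1%nat, 2%nat => Cmult (RtoC (- / sqrt 2)) Ci
  | 2%nat, 1%nat => Cmult (RtoC (/ sqrt 2)) Ci
  | _, _ => RtoC 0
  end.
Definition Jz : mat := fun i j =>
  match i, j with
  | 0%nat, 0%nat => RtoC 1
  | 2%nat, 2%nat => RtoC (-1)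
  | _, _ => RtoC 0
  end.

Definition eJ (t : R) (J : mat) : mat := mexp (mscale (Cmult (RtoC (- t)) Ci) J).

Definition Zrot (a b c : R) : mat := mmul (mmul (eJ a Jz) (eJ b Jy)) (eJ c Jz).
Definition Yrot (a b c : R) : mat := mmul (mmul (eJ a Jy) (eJ b Jz)) (eJ c Jy).

Definition proj (k : nat) : mat :=
  fun i j => if andb (Nat.eqb i k) (Nat.eqb j k) then RtoC 1 else RtoC 0.

Definition M1 (rho : mat) : mat :=
  madd (mmul (mmul (proj 0) rho) (proj 0))
       (mmul (mmul (msub mid (proj 0)) rho) (msub mid (proj 0))).

Definition Pfun (U1 U2 : mat) : C :=
  mmul (mmul U2 (M1 (mmul (mmul U1 (proj 0)) (madj U1)))) (madj U2) 1%nat 1%nat.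

(* L_3 : the (real) value of P(Z(a1,b1,c1), Y(a2,b2,c2)).  P is a diagonal
   entry of a Hermitian matrix, hence real; we take its real part. *)
Definition L3 (a1 b1 c1 a2 b2 c2 : R) : R :=
  Re (Pfun (Zrot a1 b1 c1) (Yrot a2 b2 c2)).

From Stdlib Require Import Reals Factorial Lra Lia FunctionalExtensionality.
From Coquelicot Require Import Coquelicot.
Open Scope R_scope.

(* The exponentials e^{-itJ} are computed in closed form: X = -iJ satisfies
   X^3 = -X for both spin-1 generators, so the power series of e^{tX}
   collapses to Rodrigues' formula  e^{tX} = I + sin t X + (1 - cos t) X^2.
   This gives the explicit matrices EZ t = e^{-itJz} and EY t = e^{-itJy}.
   Next, because M_1 kills the coherences between |1> and {|2>,|3>},
     P(U1,U2) = |(U2)_21 (U1)_11|^2 + |(U2)_22 (U1)_21 + (U2)_23 (U1)_31|^2,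
   and evaluating it along coordinate lines through a point with
   alpha2 = gamma2 = 0 yields elementary trigonometric functions:
   along beta1 it is sin^2 t / 2, with derivative sin b1 cos b1 at b1.
   If this vanishes then b1 = pi/2, where the derivatives along gamma2 and
   alpha2 at 0 are -cos a1 / 2 and -cos (a1 + b2) / 2; both vanishing would
   force sin a1 sin b2 = 0 with cos a1 = 0, impossible for 0 < b2 < pi. *)

Ltac Ceq := apply injective_projections; simpl; ring.

Lemma is_pseries_const (p x : R) :
  is_pseries (fun k => if Nat.eqb k 0 then p else 0) x p.
Proof.
  assert (H0 : Rabs 0 < 1) by (rewrite Rabs_R0; lra).
  pose proof (is_series_scal p _ _ (is_series_geom 0 H0)) as H.
  match type of H with is_series _ ?l =>
    replace l with p in H by (unfold scal; simpl; unfold mult; simpl; field) end.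
  eapply is_series_ext; [|exact H].
  intros [|k]; unfold scal; simpl; unfold mult, one; simpl; ring.
Qed.

Lemma is_pseries_cos (t : R) : is_pseries cos_n (t ^ 2) (cos t).
Proof.
  apply is_pseries_Reals. unfold cos. destruct (exist_cos (Rsqr t)) as [a Ha].
  unfold Pser. replace (t ^ 2) with (Rsqr t) by (unfold Rsqr; ring). exact Ha.
Qed.

Lemma is_pseries_sin (t : R) : exists a, is_pseries sin_n (t ^ 2) a /\ sin t = t * a.
Proof.
  unfold sin. destruct (exist_sin (Rsqr t)) as [a Ha]. exists a. split; [|reflexivity].
  apply is_pseries_Reals. unfold Pser. replace (t ^ 2) with (Rsqr t) by (unfold Rsqr; ring). exact Ha.
Qed.

Lemma is_series_trig (r : nat -> R) (p q w t : R) :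
  (forall k, r (2 * k)%nat = (if Nat.eqb k 0 then p else 0) + q * (-1) ^ k) ->
  (forall k, r (2 * k + 1)%nat = w * (-1) ^ k) ->
  is_series (fun n => r n * t ^ n / INR (fact n)) (p + q * cos t + w * sin t).
Proof.
  intros Heven Hodd.
  destruct (is_pseries_sin t) as [a [Ha Hsin]].
  assert (H : is_pseries (fun n => r n / INR (fact n)) t ((p + q * cos t) + t * (w * a))).
  { apply is_pseries_odd_even.
    - eapply is_pseries_ext.
      2: { apply (is_pseries_plus _ _ _ _ _ (is_pseries_const p (t ^ 2))
                    (is_pseries_scal q _ _ _ (Rmult_comm _ _) (is_pseries_cos t))). }
      intro k. unfold PS_plus, PS_scal, cos_n. rewrite Heven.
      unfold scal, plus; simpl; unfold mult, plus; simpl.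
      destruct k as [|k]; simpl Nat.eqb; cbv iota.
      + simpl. field.
      + field. apply INR_fact_neq_0.
    - eapply is_pseries_ext; [|apply (is_pseries_scal w _ _ _ (Rmult_comm _ _) Ha)].
      intro k. unfold PS_scal, sin_n. rewrite Hodd.
      unfold scal; simpl; unfold mult; simpl. field. apply INR_fact_neq_0. }
  replace (p + q * cos t + w * sin t) with ((p + q * cos t) + t * (w * a)) by (rewrite Hsin; ring).
  eapply is_series_ext; [|exact H].
  intro n. unfold scal; simpl; unfold mult; simpl. rewrite pow_n_pow. field. apply INR_fact_neq_0.
Qed.

Lemma mmul_mid_r (A : mat) (i j : nat) : (j <= 2)%nat -> mmul A mid i j = A i j.
Proof. intros Hj. destruct j as [|[|[|j]]]; try lia; unfold mmul, mid; simpl; Ceq. Qed.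

Lemma mmul_congr_r (A B B' : mat) (i j : nat) :
  (forall k, (k <= 2)%nat -> B k j = B' k j) -> mmul A B i j = mmul A B' i j.
Proof. intros H. unfold mmul. rewrite !H by lia. reflexivity. Qed.

Lemma mpow_mscale (A : mat) (t : R) (n i j : nat) :
  mpow (mscale (RtoC t) A) n i j = Cmult (RtoC (t ^ n)) (mpow A n i j).
Proof.
  revert i j. induction n as [|n IH]; intros i j; simpl mpow.
  - Ceq.
  - unfold mmul. rewrite !IH. unfold mscale. Ceq.
Qed.

Definition gen (J : mat) : mat := mscale (Cmult (RtoC (-1)) Ci) J.

Lemma eJ_gen (t : R) (J : mat) : eJ t J = mexp (mscale (RtoC t) (gen J)).
Proof.
  unfold eJ, gen. f_equal.
  apply functional_extensionality; intro i; apply functional_extensionality; intro j.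
  unfold mscale. Ceq.
Qed.

Definition span3 (X : mat) (d a b : R) : mat := fun i j =>
  Cplus (Cmult (RtoC d) (mid i j))
        (Cplus (Cmult (RtoC a) (X i j)) (Cmult (RtoC b) (mmul X X i j))).

Definition is_rot_gen (X : mat) : Prop :=
  forall i j, (i <= 2)%nat -> (j <= 2)%nat -> mmul X (mmul X X) i j = Copp (X i j).

Lemma mmul_span3 (X : mat) (d a b : R) (i j : nat) :
  is_rot_gen X -> (i <= 2)%nat -> (j <= 2)%nat ->
  mmul X (span3 X d a b) i j = span3 X 0 (d - b) a i j.
Proof.
  intros HX Hi Hj.
  assert (E : mmul X (span3 X d a b) i j =
    Cplus (Cmult (RtoC d) (mmul X mid i j))
      (Cplus (Cmult (RtoC a) (mmul X X i j)) (Cmult (RtoC b) (mmul X (mmul X X) i j))))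
    by (unfold span3, mmul; Ceq).
  rewrite E, HX, mmul_mid_r by assumption. unfold span3. Ceq.
Qed.

(* Coordinates of X^n in span{I, X, X^2}: kron0 n on I and pcoef n on (X, X^2),
   following the recursion of mmul_span3. *)
Definition kron0 (n : nat) : R := if Nat.eqb n 0 then 1 else 0.

Fixpoint pcoef (n : nat) : R * R :=
  match n with O => (0, 0) | S m => (kron0 m - snd (pcoef m), fst (pcoef m)) end.

Lemma kron0_odd (k : nat) : kron0 (2 * k + 1) = 0.
Proof. unfold kron0. destruct (Nat.eqb_spec (2 * k + 1) 0); [lia | reflexivity]. Qed.

Lemma mpow_rot_gen (X : mat) (n i j : nat) :
  is_rot_gen X -> (i <= 2)%nat -> (j <= 2)%nat ->
  mpow X n i j = span3 X (kron0 n) (fst (pcoef n)) (snd (pcoef n)) i j.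
Proof.
  intros HX. revert i j. induction n as [|n IH]; intros i j Hi Hj.
  - unfold span3, kron0. simpl. Ceq.
  - simpl mpow. rewrite (mmul_congr_r _ _ (span3 X (kron0 n) (fst (pcoef n)) (snd (pcoef n))))
      by (intros; apply IH; assumption).
    rewrite mmul_span3 by assumption. reflexivity.
Qed.

Lemma pcoef_parity (k : nat) :
  pcoef (2 * k) = (0, kron0 k - (-1) ^ k) /\ pcoef (2 * k + 1) = ((-1) ^ k, 0).
Proof.
  induction k as [|k [Heven Hodd]].
  - simpl. unfold kron0. simpl. split; f_equal; ring.
  - replace (2 * S k)%nat with (S (2 * k + 1)) by lia.
    replace (S (2 * k + 1) + 1)%nat with (S (S (2 * k + 1))) by lia.
    cbn [pcoef]. rewrite Hodd. cbn [fst snd]. rewrite kron0_odd.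
    replace (kron0 (S (2 * k + 1))) with 0 by reflexivity.
    replace (kron0 (S k)) with 0 by reflexivity.
    simpl. split; f_equal; ring.
Qed.

Lemma is_series_rodrigues (m x x2 t : R) :
  is_series (fun n => (kron0 n * m + fst (pcoef n) * x + snd (pcoef n) * x2)
                        * t ^ n / INR (fact n))
    (m + sin t * x + (1 - cos t) * x2).
Proof.
  replace (m + sin t * x + (1 - cos t) * x2) with ((m + x2) + (- x2) * cos t + x * sin t) by ring.
  apply is_series_trig; intro k; destruct (pcoef_parity k) as [Heven Hodd].
  - rewrite Heven. cbn [fst snd].
    replace (kron0 (2 * k)) with (kron0 k) by (unfold kron0; destruct k; reflexivity).
    unfold kron0. destruct (Nat.eqb k 0); ring.
  - rewrite Hodd. cbn [fst snd]. rewrite kron0_odd. ring.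
Qed.

Lemma eJ_rodrigues (J : mat) (t : R) (i j : nat) :
  is_rot_gen (gen J) -> (i <= 2)%nat -> (j <= 2)%nat ->
  eJ t J i j = span3 (gen J) 1 (sin t) (1 - cos t) i j.
Proof.
  intros HX Hi Hj. rewrite eJ_gen. unfold mexp.
  set (X := gen J).
  assert (Hpow : forall n, mpow (mscale (RtoC t) X) n i j =
            Cmult (RtoC (t ^ n)) (span3 X (kron0 n) (fst (pcoef n)) (snd (pcoef n)) i j))
    by (intro n; rewrite mpow_mscale, mpow_rot_gen by assumption; reflexivity).
  apply injective_projections; cbn [fst snd]; apply is_series_unique.
  - replace (fst (span3 X 1 (sin t) (1 - cos t) i j))
      with (Re (mid i j) + sin t * Re (X i j) + (1 - cos t) * Re (mmul X X i j))
      by (unfold span3, Re; simpl; ring).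
    eapply is_series_ext; [|apply is_series_rodrigues].
    intro n. rewrite Hpow. unfold span3, Re. simpl. unfold Rdiv. ring.
  - replace (snd (span3 X 1 (sin t) (1 - cos t) i j))
      with (Im (mid i j) + sin t * Im (X i j) + (1 - cos t) * Im (mmul X X i j))
      by (unfold span3, Im; simpl; ring).
    eapply is_series_ext; [|apply is_series_rodrigues].
    intro n. rewrite Hpow. unfold span3, Im. simpl. unfold Rdiv. ring.
Qed.

Definition s2 : R := / sqrt 2.

Lemma s2_sq : s2 ^ 2 = / 2.
Proof. unfold s2. simpl. rewrite Rmult_1_r, <- Rinv_mult, sqrt_sqrt; lra. Qed.

(* Both spin-1 generators satisfy X^3 = -X (Jz has spectrum {1, 0, -1}). *)
Lemma rot_gen_Jz : is_rot_gen (gen Jz).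
Proof.
  intros i j Hi Hj.
  destruct i as [|[|[|i]]]; try lia; destruct j as [|[|[|j]]]; try lia;
  unfold mmul, gen, mscale, Jz; Ceq.
Qed.

Lemma rot_gen_Jy : is_rot_gen (gen Jy).
Proof.
  assert (Hs3 : s2 ^ 3 = s2 / 2) by (replace (s2 ^ 3) with (s2 * s2 ^ 2) by ring; rewrite s2_sq; field).
  unfold s2 in Hs3.
  intros i j Hi Hj.
  destruct i as [|[|[|i]]]; try lia; destruct j as [|[|[|j]]]; try lia;
  unfold mmul, gen, mscale, Jy; apply injective_projections; simpl; ring_simplify;
  rewrite ?Hs3; field; apply sqrt2_neq_0.
Qed.

Definition EZ (t : R) : mat := fun i j =>
  match i, j with
  | 0%nat, 0%nat => (cos t, - sin t)
  | 1%nat, 1%nat => (1, 0)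
  | 2%nat, 2%nat => (cos t, sin t)
  | _, _ => (0, 0)
  end.

Definition EY (t : R) : mat := fun i j =>
  match i, j with
  | 0%nat, 0%nat => ((1 + cos t) / 2, 0)
  | 0%nat, 1%nat => (- s2 * sin t, 0)
  | 0%nat, 2%nat => ((1 - cos t) / 2, 0)
  | 1%nat, 0%nat => (s2 * sin t, 0)
  | 1%nat, 1%nat => (cos t, 0)
  | 1%nat, 2%nat => (- s2 * sin t, 0)
  | 2%nat, 0%nat => ((1 - cos t) / 2, 0)
  | 2%nat, 1%nat => (s2 * sin t, 0)
  | 2%nat, 2%nat => ((1 + cos t) / 2, 0)
  | _, _ => (0, 0)
  end.

Lemma eJ_Jz (t : R) (i j : nat) : (i <= 2)%nat -> (j <= 2)%nat -> eJ t Jz i j = EZ t i j.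
Proof.
  intros Hi Hj. rewrite eJ_rodrigues by (apply rot_gen_Jz || assumption).
  destruct i as [|[|[|i]]]; try lia; destruct j as [|[|[|j]]]; try lia;
  unfold span3, mmul, gen, mscale, Jz, mid, EZ; Ceq.
Qed.

Lemma eJ_Jy (t : R) (i j : nat) : (i <= 2)%nat -> (j <= 2)%nat -> eJ t Jy i j = EY t i j.
Proof.
  intros Hi Hj. rewrite eJ_rodrigues by (apply rot_gen_Jy || assumption).
  pose proof s2_sq as Hs. unfold s2 in Hs.
  destruct i as [|[|[|i]]]; try lia; destruct j as [|[|[|j]]]; try lia;
  unfold span3, mmul, gen, mscale, Jy, mid, EY, s2; apply injective_projections; simpl;
  ring_simplify; try rewrite Hs; field; apply sqrt2_neq_0.
Qed.

Definition Cabs2 (z : C) : R := Re z * Re z + Im z * Im z.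

Lemma rank_one_entry (U : mat) (i j : nat) :
  mmul (mmul U (proj 0)) (madj U) i j = Cmult (U i 0%nat) (Cconj (U j 0%nat)).
Proof. unfold mmul, proj, madj. simpl. Ceq. Qed.

Lemma M1_entry (r : mat) (l k : nat) : (l <= 2)%nat -> (k <= 2)%nat ->
  M1 r l k = if Nat.eqb l 0 then (if Nat.eqb k 0 then r 0%nat 0%nat else RtoC 0)
             else (if Nat.eqb k 0 then RtoC 0 else r l k).
Proof.
  intros Hl Hk. destruct l as [|[|[|l]]]; try lia; destruct k as [|[|[|k]]]; try lia;
  unfold M1, madd, mmul, msub, mid, proj; simpl; Ceq.
Qed.

Lemma Re_Pfun (U1 U2 : mat) : Re (Pfun U1 U2) =
  Cabs2 (Cmult (U2 1%nat 0%nat) (U1 0%nat 0%nat)) +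
  Cabs2 (Cplus (Cmult (U2 1%nat 1%nat) (U1 1%nat 0%nat)) (Cmult (U2 1%nat 2%nat) (U1 2%nat 0%nat))).
Proof.
  unfold Pfun. unfold mmul at 1 2. unfold madj at 1 2 3.
  rewrite !M1_entry by lia. cbn [Nat.eqb]. rewrite !rank_one_entry.
  unfold Re, Im, Cabs2. simpl. ring.
Qed.

(* Only the first column of Z(...) and the second row of Y(...) enter P. *)
Lemma Zrot_col0 (a b c : R) (i : nat) : (i <= 2)%nat ->
  Zrot a b c i 0%nat = Cmult (Cmult (EZ a i i) (EY b i 0%nat)) (EZ c 0%nat 0%nat).
Proof.
  intros Hi. unfold Zrot, mmul.
  destruct i as [|[|[|i]]]; try lia; rewrite !eJ_Jz, !eJ_Jy by lia; unfold EZ, EY; Ceq.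
Qed.

Lemma Yrot_row1 (a b c : R) (k : nat) : (k <= 2)%nat ->
  Yrot a b c 1%nat k =
  Cplus (Cmult (Cmult (EY a 1%nat 0%nat) (EZ b 0%nat 0%nat)) (EY c 0%nat k))
   (Cplus (Cmult (Cmult (EY a 1%nat 1%nat) (EZ b 1%nat 1%nat)) (EY c 1%nat k))
          (Cmult (Cmult (EY a 1%nat 2%nat) (EZ b 2%nat 2%nat)) (EY c 2%nat k))).
Proof.
  intros Hk. unfold Yrot, mmul.
  destruct k as [|[|[|k]]]; try lia; rewrite !eJ_Jz, !eJ_Jy by lia; unfold EZ; Ceq.
Qed.

(* Pythagoras, in the power form produced by ring_simplify. *)
Lemma sin2_pow (x : R) : sin x ^ 2 = 1 - cos x ^ 2.
Proof. rewrite <- !Rsqr_pow2. apply sin2. Qed.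

Ltac L3_normalize :=
  unfold L3; rewrite Re_Pfun, !Zrot_col0, !Yrot_row1 by lia;
  unfold EZ, EY; rewrite sin_0, cos_0;
  unfold Cabs2, Re, Im, Cmult, Cplus, RtoC; cbn [fst snd].

Lemma L3_line_b1 (a1 c1 b2 t : R) : L3 a1 t c1 0 b2 0 = sin t ^ 2 / 2.
Proof. L3_normalize. ring_simplify. rewrite s2_sq, ?sin2_pow. field. Qed.

Lemma L3_line_c2 (a1 b1 c1 b2 t : R) : cos b1 = 0 -> sin b1 = 1 ->
  L3 a1 b1 c1 0 b2 t = (sin t ^ 2 / 2 + cos t ^ 2 - sin t * cos t * cos a1) / 2.
Proof.
  intros Hc Hs. L3_normalize. rewrite Hc, Hs.
  ring_simplify. rewrite s2_sq, ?sin2_pow. field.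
Qed.

Lemma L3_line_a2 (a1 b1 c1 b2 t : R) : cos b1 = 0 -> sin b1 = 1 ->
  L3 a1 b1 c1 t b2 0 = (sin t ^ 2 / 2 + cos t ^ 2 - sin t * cos t * cos (a1 + b2)) / 2.
Proof.
  intros Hc Hs. L3_normalize. rewrite Hc, Hs, cos_plus.
  ring_simplify. rewrite s2_sq, ?sin2_pow. field.
Qed.

Lemma derive_L3_b1 (a1 b1 c1 b2 : R) :
  is_derive (fun t => L3 a1 t c1 0 b2 0) b1 (sin b1 * cos b1).
Proof.
  apply (is_derive_ext (fun t => sin t ^ 2 / 2)); [intro t; symmetry; apply L3_line_b1|].
  auto_derive; [exact I | field].
Qed.

Lemma derive_L3_c2 (a1 b1 c1 b2 : R) : cos b1 = 0 -> sin b1 = 1 ->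
  is_derive (fun t => L3 a1 b1 c1 0 b2 t) 0 (- cos a1 / 2).
Proof.
  intros Hc Hs.
  apply (is_derive_ext (fun t => (sin t ^ 2 / 2 + cos t ^ 2 - sin t * cos t * cos a1) / 2));
    [intro t; symmetry; apply L3_line_c2; assumption|].
  auto_derive; [exact I |]. rewrite sin_0, cos_0. field.
Qed.

Lemma derive_L3_a2 (a1 b1 c1 b2 : R) : cos b1 = 0 -> sin b1 = 1 ->
  is_derive (fun t => L3 a1 b1 c1 t b2 0) 0 (- cos (a1 + b2) / 2).
Proof.
  intros Hc Hs.
  apply (is_derive_ext (fun t => (sin t ^ 2 / 2 + cos t ^ 2 - sin t * cos t * cos (a1 + b2)) / 2));
    [intro t; symmetry; apply L3_line_a2; assumption|].
  auto_derive; [exact I |]. rewrite sin_0, cos_0. field.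
Qed.

Theorem lemma3 (a1 b1 c1 b2 : R)
  (ha1 : - PI < a1 <= PI) (hb1 : 0 < b1 < PI) (hc1 : - PI < c1 <= PI)
  (hb2 : 0 < b2 < PI) :
  (exists d, d <> 0 /\ is_derive (fun t => L3 t b1 c1 0 b2 0) a1 d) \/
  (exists d, d <> 0 /\ is_derive (fun t => L3 a1 t c1 0 b2 0) b1 d) \/
  (exists d, d <> 0 /\ is_derive (fun t => L3 a1 b1 t 0 b2 0) c1 d) \/
  (exists d, d <> 0 /\ is_derive (fun t => L3 a1 b1 c1 t b2 0) 0 d) \/
  (exists d, d <> 0 /\ is_derive (fun t => L3 a1 b1 c1 0 t 0) b2 d) \/
  (exists d, d <> 0 /\ is_derive (fun t => L3 a1 b1 c1 0 b2 t) 0 d).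
Proof.
  pose proof (sin_gt_0 b1 (proj1 hb1) (proj2 hb1)) as sin_b1_pos.
  pose proof (sin_gt_0 b2 (proj1 hb2) (proj2 hb2)) as sin_b2_pos.
  destruct (Req_dec (cos b1) 0) as [cos_b1 | cos_b1].
  2: { right; left. exists (sin b1 * cos b1).
       split; [apply Rmult_integral_contrapositive; lra | apply derive_L3_b1]. }
  (* At b1 = pi/2 the derivatives along gamma2 and alpha2 are -cos a1/2 and
     -cos(a1+b2)/2; they cannot vanish simultaneously since sin b2 > 0. *)
  assert (sin_b1 : sin b1 = 1) by (pose proof (sin2_pow b1) as E; rewrite cos_b1 in E; nra).
  destruct (Req_dec (cos a1) 0) as [cos_a1 | cos_a1].
  - right; right; right; left. exists (- cos (a1 + b2) / 2).
    split; [| apply derive_L3_a2; assumption].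
    assert (sin_a1 : sin a1 <> 0) by (pose proof (sin2_pow a1) as E; rewrite cos_a1 in E; nra).
    rewrite cos_plus, cos_a1. intro H. apply sin_a1. nra.
  - right; right; right; right; right. exists (- cos a1 / 2).
    split; [lra | apply derive_L3_c2; assumption].
Qed.
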